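(* Let $d=\infty$ and $C>0$. (1) For product weights ${\boldsymbol\gamma}$: ${\boldsymbol\gamma}\in\mathcal S_{d,C}$ iff $\sum_{j\in\mathbb N}\gamma_j<\infty$. (2) For POD weights ${\boldsymbol\gamma}$ with parameters $a,p$: if $p>a$ and $\Gamma_1>0$, then ${\boldsymbol\gamma}\in\mathcal S_{d,C}$ iff $\sum_{j\in\mathbb N}\gamma_j<\infty$; and if $p=a\ge1$, then $\sum_{j\in\mathbb N}(C^2\gamma_j)^{1/p}<1$ implies ${\boldsymbol\gamma}\in\mathcal S_{d,C}$. (3) For finite-order weights ${\boldsymbol\gamma}$ (of some order $\omega\in\mathbb N$): ${\boldsymbol\gamma}\in\mathcal S_{d,C}$ iff $\sum_{u\in\mathcal U_d}\gamma_u<\infty$.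
   Context: $\mathcal U_\infty$ denotes the set of finite subsets of $\mathbb N$; weights are families ${\boldsymbol\gamma}=(\gamma_u)_{u\in\mathcal U_\infty}$ of non-negative reals. For $C>0$, $\mathcal S_{\infty,C}=\{{\boldsymbol\gamma}:\sum_{v\in\mathcal U_\infty}C^{2|v|}\gamma_v<\infty\}$. Product weights: $\gamma_u=\prod_{j\in u}\gamma_j$ (with $\gamma_\emptyset=1$) for a non-increasing sequence $(\gamma_j)_{j\in\mathbb N}$ of non-negative reals. POD weights: $\gamma_u=\Gamma_{|u|}\prod_{j\in u}\gamma_j$ with $(\gamma_j)$ as before and non-negative $(\Gamma_k)_{k\ge0}$ satisfying $\Gamma_k\le C_a(k!)^a$ for all $k$ and some constants $a,C_a>0$; $p=\mathrm{decay}((\gamma_j)_{j\in\mathbb N})$, where $\mathrm{decay}((a_v)_{v\in V})=\sup\{\tau>0:\sum_v a_v^{1/\tau}<\infty\}$ ($\sup\emptyset=0$). Finite-order weights of order $\omega\in\mathbb N$: $\gamma_u=0$ whenever $|u|>\omega$. *)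

From HB Require Import structures.
From mathcomp Require Import all_boot all_order all_algebra finmap.
From mathcomp Require Import all_classical all_reals all_analysis.
Set Implicit Arguments. Unset Strict Implicit. Unset Printing Implicit Defensive.
Import Order.TTheory GRing.Theory Num.Theory.
Local Open Scope classical_set_scope.
Local Open Scope ring_scope.
Local Open Scope fset_scope.

(* U_infinity: finite subsets of the index set (nat, relabelling N = {1,2,...}). *)
Definition Uinf := {fset nat}.

Definition weights (R : realType) := Uinf -> R.

Definition nonneg_weights (R : realType) (g : weights R) := forall u, 0 <= g u.

Definition in_S (R : realType) (C : R) (g : weights R) : Prop :=
  (\esum_(v in [set: Uinf]) ((C ^+ (2 * #|` v|)%N) * g v)%:E < +oo)%E.

Definition sum_finite (R : realType) (s : nat -> R) : Prop :=
  (\esum_(j in [set: nat]) (s j)%:E < +oo)%E.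

Definition weakly_decr (R : realType) (s : nat -> R) : Prop :=
  forall i j : nat, (i <= j)%N -> s j <= s i.

Definition prod_weights (R : realType) (s : nat -> R) : weights R :=
  fun u => \prod_(j <- u) s j.

Definition POD_weights (R : realType) (Gam s : nat -> R) : weights R :=
  fun u => Gam #|` u| * \prod_(j <- u) s j.

Definition finite_order (R : realType) (omega : nat) (g : weights R) : Prop :=
  forall u : Uinf, (omega < #|` u|)%N -> g u = 0.

(* decay((a_v)_v) = sup { tau > 0 : sum_v a_v^{1/tau} < oo },  sup of empty set = 0;
   valued in the extended reals (may be +oo). *)
Definition decay (R : realType) (s : nat -> R) : \bar R :=
  ereal_sup ([set (tau%:E)%E | tau in
     [set tau : R | 0 < tau /\ sum_finite (fun j => s j `^ tau^-1)]] `|` [set 0%E]).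

From HB Require Import structures.
From mathcomp Require Import all_boot all_order all_algebra finmap.
From mathcomp Require Import all_classical all_reals all_analysis.
From mathcomp.algebra_tactics Require Import ring lra.
Import Order.TTheory GRing.Theory Num.Theory.
Set Implicit Arguments. Unset Strict Implicit. Unset Printing Implicit Defensive.
Local Open Scope classical_set_scope.
Local Open Scope fset_scope.
Local Open Scope ring_scope.

(* Summability over the finite subsets of N is tested on the partial sums over the
   subsets of {0, ..., N-1}. Since C^(2|v|) gamma_v is again a product/POD weight with
   gamma_j replaced by C^2 gamma_j, membership in S_C is plain summability of such weights.
   For product weights that partial sum is prod_(j < N) (1 + gamma_j) <= exp (sum_j gamma_j),
   and the singletons give the converse.
   For POD weights with Gamma_k <= C_a (k!)^a and r = max(1, a) >= a, superadditivity of
   x |-> x^r bounds the weights by C_a (|v|! prod_(j in v) c_j)^r with c_j = gamma_j^(1/r),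
   so everything reduces to sum_v |v|! prod_(j in v) c_j < oo whenever sum_j c_j < oo.
   For that, split the indices into a finite head and a tail of mass <= 1/2: on the tail,
   sum_v (|v| + m)! prod c_j <= m! 2^(m+1), and each head index only multiplies the constant
   and doubles the ratio of this geometric bound. Summability of c comes from a < decay(s)
   and the monotonicity of s.
   Finite-order weights only involve C^(2|v|) with |v| <= omega, which is bounded above and
   away from 0. *)

Section esum_partial_sums.
Variables (R : realType) (T : choiceType) (f : T -> R).
Hypothesis f_ge0 : forall x, 0 <= f x.
Local Notation S := (\esum_(x in [set: T]) (f x)%:E).

Lemma sum_seq_le_esum (s : seq T) : uniq s -> ((\sum_(x <- s) f x)%:E <= S)%E.
Proof.
move=> s_uniq; apply: esum_ge; exists [set` s]; first by split; [exact: finite_seq|].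
by rewrite -fsbig_seq // sumEFin.
Qed.

Lemma esum_fin_num : (S < +oo)%E -> S \is a fin_num.
Proof. by move=> S_lty; rewrite ge0_fin_numE // esum_ge0 // => x _; rewrite lee_fin. Qed.

Variable Ls : nat -> seq T.
Hypothesis Ls_uniq : forall N, uniq (Ls N).
Hypothesis Ls_exhaust :
  forall s : seq T, exists N, forall N', (N <= N')%N -> {subset s <= Ls N'}.

Lemma esum_le_partial_bound (M : R) :
  (forall N, \sum_(x <- Ls N) f x <= M) -> (S <= M%:E)%E.
Proof.
move=> le_M; apply: ge_ereal_sup => _ [X [finX _] <-].
have [s Xs] := proj1 (finite_seqP X) finX.
have [N sN] := Ls_exhaust s.
apply: (@le_trans _ _ (\sum_(x \in [set` Ls N]) (f x)%:E)%E).
  apply: lee_fsum_nneg_subset; [exact: finX | exact: finite_seq | |].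
    by move=> x; rewrite Xs !inE /= => /(sN N (leqnn N)).
  by move=> x _; rewrite lee_fin.
by rewrite -fsbig_seq // sumEFin lee_fin.
Qed.

Lemma esum_lty_partial_boundedP :
  (S < +oo)%E <-> exists M, forall N, \sum_(x <- Ls N) f x <= M.
Proof.
split=> [S_lty|[M le_M]]; last exact: le_lt_trans (esum_le_partial_bound le_M) (ltry M).
exists (fine S) => N; rewrite -lee_fin fineK ?esum_fin_num //.
exact: sum_seq_le_esum.
Qed.

Lemma esum_lt_partial_sum (e : R) : 0 < e -> (S < +oo)%E ->
  exists N, fine S - e < \sum_(x <- Ls N) f x.
Proof.
move=> e_gt0 S_lty; apply: contrapT => /forallNP no_N.
have : (S <= (fine S - e)%:E)%E.
  by apply: esum_le_partial_bound => N; rewrite leNgt; apply/negP/no_N.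
by rewrite -[X in (X <= _)%E](fineK (esum_fin_num S_lty)) lee_fin; lra.
Qed.

End esum_partial_sums.

Lemma esum_lty_le (R : realType) (T : choiceType) (f g : T -> R) (K : R) :
  0 <= K -> (forall x, 0 <= g x) -> (forall x, f x <= K * g x) ->
  (\esum_(x in [set: T]) (g x)%:E < +oo)%E -> (\esum_(x in [set: T]) (f x)%:E < +oo)%E.
Proof.
move=> K_ge0 g_ge0 le_fg g_lty; have g_fin := esum_fin_num g_ge0 g_lty.
apply: le_lt_trans (ltry (K * fine (\esum_(x in [set: T]) (g x)%:E))).
apply: ge_ereal_sup => _ [X [finX _] <-].
apply: (@le_trans _ _ (\sum_(x \in X) (K * g x)%:E)%E).
  by apply: lee_fsum => // x _; rewrite lee_fin.
rewrite fsumEFin // -mulr_fsumr lee_fin ler_wpM2l // -lee_fin fineK // -fsumEFin //.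
by apply: ereal_sup_ubound; exists X.
Qed.

Fixpoint fsubsets (L : seq nat) : seq {fset nat} :=
  if L is x :: L' then fsubsets L' ++ [seq x |` v | v <- fsubsets L'] else [:: fset0].

Lemma fsubsets_subset (L : seq nat) (v : {fset nat}) : v \in fsubsets L -> {subset v <= L}.
Proof.
elim: L v => [|x L IH] v /=; first by rewrite inE => /eqP -> j; rewrite inE.
rewrite mem_cat => /orP[/IH vL j /vL jL|/mapP[w /IH wL ->] j]; first by rewrite inE jL orbT.
by rewrite in_fset1U inE => /orP[->//|/wL ->]; rewrite orbT.
Qed.

Lemma mem_fsubsets (L : seq nat) (v : {fset nat}) : uniq L -> {subset v <= L} -> v \in fsubsets L.
Proof.
elim: L v => [|x L IH] v.
  move=> _ vL; suff -> : v = fset0 by [].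
  by apply/fsetP => j; rewrite in_fset0; apply/negbTE/negP => /vL.
rewrite /= => /andP[xL L_uniq] vxL; rewrite mem_cat.
have [xv|xv] := boolP (x \in v).
  apply/orP; right; apply/mapP; exists (v `\ x); last by rewrite fsetD1K.
  apply: IH => // j; rewrite in_fsetD1 => /andP[jx /vxL].
  by rewrite inE (negbTE jx).
apply/orP; left; apply: IH => // j jv; have := vxL j jv; rewrite inE.
by case: eqP jv => [->|//]; rewrite (negbTE xv).
Qed.

Lemma fsubsets_notin x (L : seq nat) (v : {fset nat}) :
  x \notin L -> v \in fsubsets L -> x \notin v.
Proof. by move=> xL /fsubsets_subset vL; apply: contra xL => /vL. Qed.

Lemma fsubsets_uniq (L : seq nat) : uniq L -> uniq (fsubsets L).
Proof.
elim: L => [|x L IH] //= /andP[xL L_uniq].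
rewrite cat_uniq IH //=; apply/andP; split.
  apply/hasPn => _ /mapP[v vL ->]; apply/negP => /(fsubsets_notin xL).
  by rewrite fset1U1.
rewrite map_inj_in_uniq ?IH // => v w vL wL /fsetP eq_xv_xw; apply/fsetP => j.
have [->|jx] := eqVneq j x.
  by rewrite (negbTE (fsubsets_notin xL vL)) (negbTE (fsubsets_notin xL wL)).
by have := eq_xv_xw j; rewrite !in_fset1U (negbTE jx).
Qed.

Lemma big_fsubsets_cons (V : nmodType) (F : {fset nat} -> V) x L :
  \sum_(v <- fsubsets (x :: L)) F v =
  \sum_(v <- fsubsets L) F v + \sum_(v <- fsubsets L) F (x |` v).
Proof. by rewrite /= big_cat big_map. Qed.

Lemma iota_exhaust (s : seq nat) :
  exists N, forall N', (N <= N')%N -> {subset s <= iota 0 N'}.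
Proof.
exists (\max_(i <- s) i).+1 => N' le_N' x xs; rewrite mem_iota /= add0n.
by apply: leq_trans le_N'; rewrite ltnS; exact: (leq_bigmax_seq (F := id)).
Qed.

Lemma fsubsets_iota_exhaust (s : seq {fset nat}) :
  exists N, forall N', (N <= N')%N -> {subset s <= fsubsets (iota 0 N')}.
Proof.
have [N sN] := iota_exhaust (flatten [seq enum_fset v | v <- s]).
exists N => N' le_N' v vs; apply: mem_fsubsets; first exact: iota_uniq.
move=> j jv; apply: (sN N' le_N'); apply/flattenP.
by exists (enum_fset v) => //; apply: map_f.
Qed.

Section summability.
Variable R : realType.

Lemma sum_finite_boundedP (s : nat -> R) : (forall j, 0 <= s j) ->
  sum_finite s <-> exists M, forall N, \sum_(j <- iota 0 N) s j <= M.
Proof.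
move=> s_ge0; apply: esum_lty_partial_boundedP => //; first exact: iota_uniq.
exact: iota_exhaust.
Qed.

Lemma esum_fsubsets_boundedP (g : {fset nat} -> R) : (forall v, 0 <= g v) ->
  (\esum_(v in [set: {fset nat}]) (g v)%:E < +oo)%E <->
  exists M, forall N, \sum_(v <- fsubsets (iota 0 N)) g v <= M.
Proof.
move=> g_ge0; apply: esum_lty_partial_boundedP => //; last exact: fsubsets_iota_exhaust.
by move=> N; apply/fsubsets_uniq/iota_uniq.
Qed.

Lemma sum_finite_fset1 (g : {fset nat} -> R) : (forall v, 0 <= g v) ->
  (\esum_(v in [set: {fset nat}]) (g v)%:E < +oo)%E -> sum_finite (fun j => g [fset j]).
Proof.
move=> g_ge0; apply: le_lt_trans.
rewrite -(esum_image setT fset1 (fun v => (g v)%:E)); last by move=> i j _ _ /fset1_inj.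
rewrite [leRHS](esum_mkcond [set: {fset nat}]) [leLHS]esum_mkcond.
by apply: le_esum => v _; rewrite in_setT; case: ifP; rewrite ?lee_fin.
Qed.

Lemma sum_finite_scale (k : R) (s : nat -> R) : 0 < k -> (forall j, 0 <= s j) ->
  sum_finite (fun j => k * s j) <-> sum_finite s.
Proof.
move=> k_gt0 s_ge0; split.
  apply: (esum_lty_le (K := k^-1)); first by rewrite invr_ge0 ltW.
    by move=> j; rewrite mulr_ge0 // ltW.
  by move=> j; rewrite mulrA mulVf ?gt_eqF // mul1r.
exact: (esum_lty_le (K := k)) (ltW k_gt0) s_ge0 (fun j => lexx _).
Qed.

Lemma sum_finite_tail_le (s : nat -> R) (e : R) : (forall j, 0 <= s j) -> 0 < e ->
  sum_finite s -> exists N0, forall N, \sum_(j <- iota N0 N) s j <= e.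
Proof.
move=> s_ge0 e_gt0 s_sum.
have [N0 lt_N0] := esum_lt_partial_sum s_ge0 (iota_uniq 0) iota_exhaust e_gt0 s_sum.
exists N0 => N; have := sum_seq_le_esum s (iota_uniq 0 (N0 + N)).
rewrite -(fineK (esum_fin_num s_ge0 s_sum)) lee_fin iotaD big_cat /=.
by move: lt_N0; set S := fine _; lra.
Qed.

End summability.

Section weights.
Variable R : realType.
Implicit Types (s b Gam : nat -> R) (C : R).

Lemma prod_weights_fset1 s j : prod_weights s [fset j] = s j.
Proof. by rewrite /prod_weights big_seq_fset1. Qed.

Lemma POD_weights_fset1 Gam s j : POD_weights Gam s [fset j] = Gam 1%N * s j.
Proof. by rewrite /POD_weights cardfs1 big_seq_fset1. Qed.

Lemma prod_weights_ge0 s : (forall j, 0 <= s j) -> forall v, 0 <= prod_weights s v.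
Proof. by move=> s_ge0 v; apply: prodr_ge0. Qed.

Lemma POD_weights_ge0 Gam s : (forall k, 0 <= Gam k) -> (forall j, 0 <= s j) ->
  forall v, 0 <= POD_weights Gam s v.
Proof. by move=> Gam_ge0 s_ge0 v; rewrite mulr_ge0 ?prod_weights_ge0. Qed.

Lemma prodrMl_fset (k : R) s (v : {fset nat}) :
  \prod_(j <- v) (k * s j) = k ^+ #|` v| * \prod_(j <- v) s j.
Proof. by rewrite big_split /= big_const_seq count_predT -Monoid.iteropE. Qed.

Lemma in_S_prod_weightsE C s :
  in_S C (prod_weights s) =
  (\esum_(v in [set: {fset nat}]) (prod_weights (fun j => C ^+ 2 * s j) v)%:E < +oo)%E.
Proof. by rewrite /in_S; under eq_esum do rewrite /prod_weights exprM -prodrMl_fset. Qed.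

Lemma in_S_POD_weightsE C Gam s :
  in_S C (POD_weights Gam s) =
  (\esum_(v in [set: {fset nat}]) (POD_weights Gam (fun j => C ^+ 2 * s j) v)%:E < +oo)%E.
Proof.
by rewrite /in_S; under eq_esum do rewrite /POD_weights mulrCA exprM -prodrMl_fset.
Qed.

Lemma sum_fsubsets_prod_weights b L : uniq L ->
  \sum_(v <- fsubsets L) prod_weights b v = \prod_(j <- L) (1 + b j).
Proof.
elim: L => [_|x L IH /= /andP[xL L_uniq]].
  by rewrite /= big_seq1 big_nil /prod_weights big_seq_fset0.
rewrite big_fsubsets_cons big_cons -IH // mulrDl mul1r; congr (_ + _).
rewrite mulr_sumr !big_seq; apply: eq_bigr => v vL.
by rewrite /prod_weights big_fsetU1 // (fsubsets_notin xL vL).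
Qed.

Lemma prod_weights_lty b : (forall j, 0 <= b j) ->
  (\esum_(v in [set: {fset nat}]) (prod_weights b v)%:E < +oo)%E <-> sum_finite b.
Proof.
move=> b_ge0; split.
  move=> /(sum_finite_fset1 (prod_weights_ge0 b_ge0)).
  by under eq_fun do rewrite prod_weights_fset1.
move=> /(sum_finite_boundedP b_ge0)[M le_M].
apply/(esum_fsubsets_boundedP (prod_weights_ge0 b_ge0)); exists (expR M) => N.
rewrite sum_fsubsets_prod_weights ?iota_uniq //.
apply: (@le_trans _ _ (\prod_(j <- iota 0 N) expR (b j))).
  by apply: ler_prod => j _; rewrite expR_ge1Dx andbT addr_ge0.
by rewrite -expR_sum ler_expR.
Qed.

End weights.

Lemma ler_expr_1Dn (R : realDomainType) (x : R) (k n : nat) : 0 <= x -> (k <= n)%N ->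
  x ^+ k <= (1 + x) ^+ n.
Proof.
move=> x_ge0 le_kn; apply: (@le_trans _ _ ((1 + x) ^+ k)).
  by rewrite lerXn2r ?nnegrE ?addr_ge0 ?lerDr.
by rewrite ler_weXn2l // lerDl.
Qed.

Lemma in_S_finite_order (R : realType) (C : R) (omega : nat) (g : weights R) :
  0 < C -> nonneg_weights g -> finite_order omega g ->
  in_S C g <-> (\esum_(u in [set: Uinf]) (g u)%:E < +oo)%E.
Proof.
move=> C_gt0 g_ge0 g_omega; have C2_gt0 : 0 < C ^+ 2 by rewrite exprn_gt0.
have Cg_ge0 v : 0 <= C ^+ (2 * #|` v|) * g v by rewrite mulr_ge0 ?exprn_ge0 ?g_ge0 ?ltW.
rewrite /in_S; split.
  apply: (esum_lty_le (K := (1 + (C ^+ 2)^-1) ^+ omega)) => //.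
    by rewrite exprn_ge0 // addr_ge0 // invr_ge0 ltW.
  move=> v; have [le_v|lt_v] := leqP #|` v| omega; last by rewrite g_omega ?mulr0.
  rewrite mulrA -[leLHS]mul1r; apply: ler_wpM2r => //.
  rewrite exprM -[leLHS](mulVf (expf_neq0 #|` v| (lt0r_neq0 C2_gt0))) -exprVn.
  apply: ler_wpM2r; first by rewrite exprn_ge0 ?ltW.
  by rewrite ler_expr_1Dn // invr_ge0 ltW.
apply: (esum_lty_le (K := (1 + C ^+ 2) ^+ omega)); first by rewrite exprn_ge0 // addr_ge0 // ltW.
  exact: g_ge0.
move=> v; have [le_v|lt_v] := leqP #|` v| omega; last by rewrite g_omega ?mulr0.
by rewrite exprM; apply: ler_wpM2r => //; rewrite ler_expr_1Dn // ltW.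
Qed.

Lemma exprDn_ge_linear (R : realDomainType) (u d : R) (n : nat) : 0 <= u -> 0 <= d ->
  u ^+ n.+1 + n.+1%:R * (u ^+ n * d) <= (u + d) ^+ n.+1.
Proof.
move=> u_ge0 d_ge0; elim: n => [|n IH]; first by rewrite expr0 mul1r !expr1; lra.
have un_ge0 : 0 <= u ^+ n by rewrite exprn_ge0.
rewrite [leRHS]exprS; apply: le_trans (ler_wpM2l (addr_ge0 u_ge0 d_ge0) IH).
rewrite !exprS -[n.+2]addn1 natrD -subr_ge0.
by rewrite [X in 0 <= X](_ : _ = n.+1%:R * (u ^+ n * d * d)) ?mulr_ge0 //; ring.
Qed.

Section factorial_weights.
Variables (R : realType) (c : nat -> R).
Hypothesis c_ge0 : forall j, 0 <= c j.

(* [fact_sum L 0] is a partial sum of the POD weights with Gamma_k = k!; the shift [m]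
   is what makes the recursion on [L] close. *)
Definition fact_sum (L : seq nat) (m : nat) : R :=
  \sum_(v <- fsubsets L) ((#|` v| + m)`!)%:R * \prod_(j <- v) c j.

Lemma fact_sum_ge0 L m : 0 <= fact_sum L m.
Proof. by apply: sumr_ge0 => v _; rewrite mulr_ge0 // prodr_ge0. Qed.

Lemma fact_sum_cons x L m : x \notin L ->
  fact_sum (x :: L) m = fact_sum L m + c x * fact_sum L m.+1.
Proof.
move=> xL; rewrite /fact_sum big_fsubsets_cons mulr_sumr; congr (_ + _).
rewrite !big_seq; apply: eq_bigr => v vL; have xv := fsubsets_notin xL vL.
by rewrite cardfsU1 xv big_fsetU1 //= add1n addSnnS mulrCA.
Qed.

(* With sigma the mass of [T]: the sum is at most
   m! sum_k binomial(k + m, m) sigma^k = m! / (1 - sigma)^(m+1). *)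
Lemma fact_sum_lt1 T : uniq T -> \sum_(j <- T) c j < 1 ->
  forall m, fact_sum T m * (1 - \sum_(j <- T) c j) ^+ m.+1 <= (m`!)%:R.
Proof.
elim: T => [_ _ m|x L IH /= /andP[xL L_uniq]].
  by rewrite /fact_sum /= big_seq1 big_seq_fset0 big_nil cardfs0 subr0 expr1n !mulr1.
rewrite big_cons => lt1 m.
have lt1_L : \sum_(j <- L) c j < 1.
  by apply: le_lt_trans lt1; rewrite lerDr.
set w := 1 - \sum_(j <- L) c j; set u := 1 - (c x + _).
have w_gt0 : 0 < w by rewrite subr_gt0.
have u_ge0 : 0 <= u by rewrite subr_ge0 ltW.
have wE : w = u + c x by rewrite /u /w; ring.
have um_ge0 : 0 <= u ^+ m.+1 by rewrite exprn_ge0.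
have IHm : fact_sum L m * w ^+ m.+1 <= (m`!)%:R := IH L_uniq lt1_L m.
have IHm1 : fact_sum L m.+1 * w ^+ m.+2 <= m.+1%:R * (m`!)%:R.
  by rewrite -natrM -factS; exact: IH.
rewrite fact_sum_cons // -(ler_pM2r (exprn_gt0 m.+2 w_gt0)).
apply: (@le_trans _ _ ((m`!)%:R * (u ^+ m.+1 * (w + m.+1%:R * c x)))).
  rewrite [w ^+ m.+2]exprS in IHm1 *.
  have A := ler_wpM2r (mulr_ge0 um_ge0 (ltW w_gt0)) IHm.
  have B := ler_wpM2l (mulr_ge0 (c_ge0 x) um_ge0) IHm1.
  move: A B; set W := w ^+ m.+1; set U := u ^+ m.+1 => A B.
  rewrite [leLHS](_ : _ = fact_sum L m * W * (U * w) +
    c x * U * (fact_sum L m.+1 * (w * W))); [lra | ring].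
apply: ler_wpM2l => //; rewrite wE.
have -> : u ^+ m.+1 * (u + c x + m.+1%:R * c x) = u ^+ m.+2 + m.+2%:R * (u ^+ m.+1 * c x).
  by rewrite [u ^+ m.+2]exprS -[m.+2]addn1 natrD; ring.
exact: exprDn_ge_linear.
Qed.

Definition fact_sum_geom (L : seq nat) (K mu : R) :=
  forall m, fact_sum L m <= (m`!)%:R * K * mu ^+ m.+1.

Lemma fact_sum_geom_half T : uniq T -> \sum_(j <- T) c j <= 2^-1 -> fact_sum_geom T 1 2.
Proof.
move=> T_uniq le_half m; rewrite mulr1 -ler_pdivrMr ?exprn_gt0 // -exprVn.
apply: le_trans (fact_sum_lt1 T_uniq (le_lt_trans le_half _) m); last lra.
by apply: ler_wpM2l; [exact: fact_sum_ge0 | rewrite lerXn2r ?nnegrE; lra].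
Qed.

Lemma fact_sum_geom_cons x L K mu : x \notin L -> 0 <= K -> 0 <= mu ->
  fact_sum_geom L K mu -> fact_sum_geom (x :: L) (K * (1 + c x * mu)) (2 * mu).
Proof.
move=> xL K_ge0 mu_ge0 geom m; rewrite fact_sum_cons //.
have le_m1 : m.+1%:R <= 2 ^+ m.+1 :> R by rewrite -natrX ler_nat ltnW // ltn_expl.
have le_1 : 1 <= 2 ^+ m.+1 :> R by rewrite exprn_ege1 // ler1n.
apply: le_trans (lerD (geom m) (ler_wpM2l (c_ge0 x) (geom m.+1))) _.
rewrite factS natrM exprMn [mu ^+ m.+2]exprS.
set F := (m`!)%:R; set P := 2 ^+ m.+1; set M := mu ^+ m.+1.
have FKM_ge0 : 0 <= F * K * M by rewrite !mulr_ge0 ?exprn_ge0.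
have cmu_ge0 : 0 <= c x * mu by rewrite mulr_ge0.
rewrite [leLHS](_ : _ = F * K * M * (1 + c x * mu * m.+1%:R)); last by ring.
rewrite [leRHS](_ : _ = F * K * M * (P + c x * mu * P)); last by ring.
by apply: ler_wpM2l => //; apply: lerD => //; apply: ler_wpM2l.
Qed.

(* The constants only depend on the head [H], which makes the bound uniform in the tail. *)
Lemma fact_sum_geom_cat K mu H : 0 <= K -> 0 <= mu ->
  exists K' mu', [/\ 0 <= K', 0 <= mu' &
    forall T, uniq (H ++ T) -> fact_sum_geom T K mu -> fact_sum_geom (H ++ T) K' mu'].
Proof.
move=> K_ge0 mu_ge0; elim: H => [|x H [K' [mu' [K'_ge0 mu'_ge0 geom_cat]]]].
  by exists K, mu.
exists (K' * (1 + c x * mu')), (2 * mu'); split.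
- by rewrite mulr_ge0 // addr_ge0 // mulr_ge0.
- by rewrite mulr_ge0.
move=> T /= /andP[xHT HT_uniq] geom_T.
exact: fact_sum_geom_cons (geom_cat T HT_uniq geom_T).
Qed.

Lemma POD_fact_weights_lty : sum_finite c ->
  (\esum_(v in [set: {fset nat}]) (POD_weights (fun k => (k`!)%:R) c v)%:E < +oo)%E.
Proof.
move=> c_sum; have half_gt0 : 0 < 2^-1 :> R by rewrite invr_gt0.
have [N0 tail_half] := sum_finite_tail_le c_ge0 half_gt0 c_sum.
have [K [mu [_ _ geom_cat]]] := fact_sum_geom_cat (iota 0 N0) ler01 (ler0n R 2).
have fact_ge0 k : 0 <= (k`!)%:R :> R by [].
apply/(@esum_lty_partial_boundedP _ _ _ (POD_weights_ge0 fact_ge0 c_ge0)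
         (fun N => fsubsets (iota 0 (N0 + N)))).
- by move=> N; apply/fsubsets_uniq/iota_uniq.
- move=> s; have [N sN] := fsubsets_iota_exhaust s.
  by exists N => N' le_N'; apply: sN; rewrite (leq_trans le_N') ?leq_addl.
exists (K * mu) => N.
have := geom_cat (iota N0 N) _ (fact_sum_geom_half (iota_uniq N0 N) (tail_half N)) 0%N.
rewrite -iotaD fact0 mul1r expr1 => /(_ (iota_uniq 0 _)).
by rewrite /fact_sum; under eq_bigr do rewrite addn0.
Qed.

End factorial_weights.

Section powR_sums.
Variable R : realType.

Lemma prodr_powR (I : Type) (s : seq I) (F : I -> R) (r : R) : (forall i, 0 <= F i) ->
  \prod_(i <- s) F i `^ r = (\prod_(i <- s) F i) `^ r.
Proof.
move=> F_ge0; elim: s => [|x s IH]; first by rewrite !big_nil powR1.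
by rewrite !big_cons IH powRM // prodr_ge0.
Qed.

Lemma ler_powRD (x y r : R) : 0 <= x -> 0 <= y -> 1 <= r ->
  x `^ r + y `^ r <= (x + y) `^ r.
Proof.
move=> x_ge0 y_ge0 r_ge1; have r_gt0 : 0 < r by lra.
have xy_ge0 : 0 <= x + y by rewrite addr_ge0.
rewrite -(mulr_powRB1 x_ge0 r_gt0) -(mulr_powRB1 y_ge0 r_gt0) -(mulr_powRB1 xy_ge0 r_gt0).
rewrite mulrDl; apply: lerD; apply: ler_wpM2l => //.
  by apply: ge0_ler_powR; rewrite ?nnegrE ?lerDl //; lra.
by apply: ge0_ler_powR; rewrite ?nnegrE ?lerDr //; lra.
Qed.

Lemma ler_sum_powR (I : Type) (s : seq I) (F : I -> R) (r : R) :
  (forall i, 0 <= F i) -> 1 <= r -> \sum_(i <- s) F i `^ r <= (\sum_(i <- s) F i) `^ r.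
Proof.
move=> F_ge0 r_ge1; elim: s => [|x s IH]; first by rewrite !big_nil powR_ge0.
rewrite !big_cons; apply: le_trans (ler_powRD (F_ge0 x) (sumr_ge0 _ _) r_ge1) => //.
exact: lerD.
Qed.

End powR_sums.

Section POD_weights_summability.
Variable R : realType.
Implicit Types (b Gam : nat -> R).

Lemma POD_weights_le_fact_powR Gam b (Ca a r : R) (v : {fset nat}) :
  0 <= Ca -> 0 < r -> a <= r -> (forall k, Gam k <= Ca * (k`!)%:R `^ a) ->
  (forall j, 0 <= b j) ->
  POD_weights Gam b v <=
  Ca * POD_weights (fun k => (k`!)%:R) (fun j => b j `^ r^-1) v `^ r.
Proof.
move=> Ca_ge0 r_gt0 le_ar Gam_le b_ge0.
have c_ge0 j : 0 <= b j `^ r^-1 by apply: powR_ge0.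
rewrite /POD_weights powRM ?prodr_ge0 // -prodr_powR // mulrA.
under [X in _ <= _ * X]eq_bigr do rewrite -powRrM mulVf ?gt_eqF // powRr1 //.
apply: ler_wpM2r; first exact: prodr_ge0.
apply: le_trans (Gam_le _) _; apply: ler_wpM2l => //.
by apply: ler_powR; rewrite // ler1n fact_gt0.
Qed.

Lemma POD_weights_lty Gam b (Ca a r : R) :
  0 <= Ca -> a <= r -> 1 <= r -> (forall k, 0 <= Gam k) ->
  (forall k, Gam k <= Ca * (k`!)%:R `^ a) -> (forall j, 0 <= b j) ->
  sum_finite (fun j => b j `^ r^-1) ->
  (\esum_(v in [set: {fset nat}]) (POD_weights Gam b v)%:E < +oo)%E.
Proof.
move=> Ca_ge0 le_ar r_ge1 Gam_ge0 Gam_le b_ge0 c_sum; have r_gt0 : 0 < r by lra.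
have c_ge0 j : 0 <= b j `^ r^-1 by apply: powR_ge0.
have fact_ge0 k : 0 <= (k`!)%:R :> R by [].
have [M le_M] := (esum_fsubsets_boundedP (POD_weights_ge0 fact_ge0 c_ge0)).1
  (POD_fact_weights_lty c_ge0 c_sum).
apply/(esum_fsubsets_boundedP (POD_weights_ge0 Gam_ge0 b_ge0)); exists (Ca * M `^ r) => N.
apply: le_trans (ler_sum _ (fun v _ =>
  POD_weights_le_fact_powR v Ca_ge0 r_gt0 le_ar Gam_le b_ge0)) _.
rewrite -mulr_sumr; apply: ler_wpM2l => //.
apply: le_trans (ler_sum_powR _ (POD_weights_ge0 fact_ge0 c_ge0) r_ge1) _.
have sum_ge0 N' : 0 <= \sum_(v <- fsubsets (iota 0 N'))
    POD_weights (fun k => (k`!)%:R) (fun j => b j `^ r^-1) v.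
  by apply: sumr_ge0 => v _; exact: POD_weights_ge0.
apply: ge0_ler_powR; rewrite ?nnegrE ?(ltW r_gt0) //.
exact: le_trans (sum_ge0 0%N) (le_M 0%N).
Qed.

Lemma POD_weights_lty_sum_finite Gam b : 0 < Gam 1%N ->
  (forall k, 0 <= Gam k) -> (forall j, 0 <= b j) ->
  (\esum_(v in [set: {fset nat}]) (POD_weights Gam b v)%:E < +oo)%E -> sum_finite b.
Proof.
move=> Gam1_gt0 Gam_ge0 b_ge0 /(sum_finite_fset1 (POD_weights_ge0 Gam_ge0 b_ge0)).
by under eq_fun do rewrite POD_weights_fset1; rewrite sum_finite_scale.
Qed.

End POD_weights_summability.

Section decay.
Variable R : realType.
Implicit Types (s : nat -> R).

Lemma decay_gt_sum_finite s a : 0 < a -> (a%:E < decay s)%E ->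
  exists2 tau, a < tau & sum_finite (fun j => s j `^ tau^-1).
Proof.
move=> a_gt0 /ereal_sup_gt[_ [[tau [_ tau_sum] <-]|->]].
  by rewrite lte_fin; exists tau.
by rewrite lte_fin; lra.
Qed.

Lemma sum_finite_powR_le s r tau : (forall j, 0 <= s j) -> weakly_decr s ->
  0 < r -> r <= tau -> sum_finite (fun j => s j `^ tau^-1) -> sum_finite (fun j => s j `^ r^-1).
Proof.
move=> s_ge0 s_decr r_gt0 le_rtau; set e := r^-1 - tau^-1.
have e_ge0 : 0 <= e by rewrite subr_ge0 lef_pV2 ?posrE //; lra.
apply: (esum_lty_le (K := s 0%N `^ e)) => [|j|j]; rewrite ?powR_ge0 //.
rewrite (_ : r^-1 = e + tau^-1); last by rewrite /e; ring.
rewrite powRD; last by rewrite /e subrK invr_eq0 gt_eqF.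
by apply: ler_wpM2r; rewrite ?powR_ge0 // ge0_ler_powR ?nnegrE ?s_decr.
Qed.

Lemma sum_finite_powR_max1 s a : (forall j, 0 <= s j) -> weakly_decr s -> 0 < a ->
  (a%:E < decay s)%E -> sum_finite s -> sum_finite (fun j => s j `^ (Num.max 1 a)^-1).
Proof.
move=> s_ge0 s_decr a_gt0 lt_decay s_sum; have [le_a1|lt_1a] := leP a 1.
  by rewrite invr1; under eq_fun do rewrite powRr1 //.
have [tau lt_atau tau_sum] := decay_gt_sum_finite a_gt0 lt_decay.
exact: sum_finite_powR_le s_decr a_gt0 (ltW lt_atau) tau_sum.
Qed.

Lemma sum_finite_powR_scale s (k r : R) : 0 <= k -> (forall j, 0 <= s j) ->
  sum_finite (fun j => s j `^ r) -> sum_finite (fun j => (k * s j) `^ r).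
Proof.
move=> k_ge0 s_ge0; apply: (esum_lty_le (K := k `^ r)) => [|j|j]; rewrite ?powR_ge0 //.
by rewrite powRM.
Qed.

End decay.

Theorem mainTheorem7 (R : realType) (C : R) (hC : 0 < C) :
  (forall s : nat -> R, (forall j, 0 <= s j) -> weakly_decr s ->
     (in_S C (prod_weights s) <-> sum_finite s)) /\
  (forall (s Gam : nat -> R) (a Ca : R),
     (forall j, 0 <= s j) -> weakly_decr s ->
     (forall k, 0 <= Gam k) -> 0 < a -> 0 < Ca ->
     (forall k, Gam k <= Ca * (k`!)%:R `^ a) ->
     ((a%:E < decay s)%E -> 0 < Gam 1%N ->
        (in_S C (POD_weights Gam s) <-> sum_finite s)) /\
     (decay s = a%:E -> 1 <= a ->
        (\esum_(j in [set: nat]) ((C ^+ 2 * s j) `^ a^-1)%:E < 1%:E)%E ->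
        in_S C (POD_weights Gam s))) /\
  (forall (omega : nat) (g : weights R), (0 < omega)%N ->
     nonneg_weights g -> finite_order omega g ->
     (in_S C g <-> (\esum_(u in [set: Uinf]) (g u)%:E < +oo)%E)).
Proof.
have C2_gt0 : 0 < C ^+ 2 by rewrite exprn_gt0.
have Cs_ge0 (s : nat -> R) : (forall j, 0 <= s j) -> forall j, 0 <= C ^+ 2 * s j.
  by move=> s_ge0 j; rewrite mulr_ge0 ?s_ge0 ?ltW.
split=> [s s_ge0 _|].
  rewrite in_S_prod_weightsE.
  exact: iff_trans (prod_weights_lty (Cs_ge0 s s_ge0)) (sum_finite_scale C2_gt0 s_ge0).
split=> [s Gam a Ca s_ge0 s_decr Gam_ge0 a_gt0 Ca_gt0 Gam_le|omega g _]; last first.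
  exact: in_S_finite_order.
rewrite !in_S_POD_weightsE; split=> [lt_decay Gam1_gt0|_ a_ge1 lt1]; first split.
- move=> /(POD_weights_lty_sum_finite Gam1_gt0 Gam_ge0 (Cs_ge0 s s_ge0)).
  by move=> /(sum_finite_scale C2_gt0 s_ge0).
- move=> s_sum; apply: (POD_weights_lty (r := Num.max 1 a) (ltW Ca_gt0) _ _ Gam_ge0 Gam_le).
  + by rewrite le_max lexx orbT.
  + by rewrite le_max lexx.
  + exact: Cs_ge0.
  + apply: (sum_finite_powR_scale (ltW C2_gt0) s_ge0).
    exact: sum_finite_powR_max1 s_ge0 s_decr a_gt0 lt_decay s_sum.
(* The case p = a needs neither decay s = a nor the bound 1, only finiteness. *)
apply: (POD_weights_lty (ltW Ca_gt0) (lexx a) a_ge1 Gam_ge0 Gam_le (Cs_ge0 s s_ge0)).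
exact: lt_trans lt1 (ltry 1).
Qed.
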